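(* Let $f:\{0,1\}^N\to\{0,1\}$ be a non-constant boolean function. Then $s(f)\ge C(\deg(f))$.
   Context: For a boolean function $f$ on $N$ variables and $\mathbf{x}\in\{0,1\}^N$, the sensitivity $s_{\mathbf{x}}(f)$ is the number of coordinates $\ell$ such that flipping the $\ell$-th bit of $\mathbf{x}$ changes the value of $f$; the sensitivity of $f$ is $s(f)=\max_{\mathbf{x}} s_{\mathbf{x}}(f)$. The degree $\deg(f)$ is the smallest degree of a real polynomial in $x_1,\dots,x_N$ agreeing with $f$ on $\{0,1\}^N$. The game $G_n$ ($n$ a positive integer): Alice receives, as a stream, a permutation $\sigma=(\sigma_1,\dots,\sigma_n)$ of $[n]=\{1,\dots,n\}$ followed by a bit $b\in\{0,1\}$. She has an array $\mathbf{v}=(v_1,\dots,v_n)$ whose cells are initially empty. For each $i<n$, upon receiving $\sigma_i$ she writes a bit in cell $\sigma_i$; this bit may depend on everything she has received so far ($\sigma_1,\dots,\sigma_i$), and once written it cannot be changed. Upon receiving $\sigma_n$ and $b$ she writes $b$ in cell $\sigma_n$. Bob receives the completed array $\mathbf{v}\in\{0,1\}^n$ and outputs a set $J\subseteq[n]$, as a function of $\mathbf{v}$. A protocol (Alice's writing rule together with Bob's output map) is valid if $\sigma_n\in J$ for every $\sigma$ and $b$. Its cost is the maximum of $|J|$ over all $\sigma,b$. $C(n)$ denotes the minimum cost of a valid protocol for $G_n$. *)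

From HB Require Import structures.
From mathcomp Require Import all_boot all_order all_algebra all_fingroup.
From mathcomp Require Import mpoly.
From mathcomp Require Import Rstruct.
From Stdlib Require Import ClassicalEpsilon.
From Stdlib Require Rdefinitions.
Notation R := Rdefinitions.R.

Set Implicit Arguments.
Unset Strict Implicit.
Unset Printing Implicit Defensive.

Import GRing.Theory.
Local Open Scope ring_scope.

(* The boolean cube {0,1}^N, with bits 0/1 represented by false/true. *)
Definition cube (N : nat) := {ffun 'I_N -> bool}.

Definition flip (N : nat) (x : cube N) (l : 'I_N) : cube N :=
  [ffun j => if j == l then ~~ x j else x j].

Definition sens_at (N : nat) (f : cube N -> bool) (x : cube N) : nat :=
  #|[set l : 'I_N | f (flip x l) != f x]|.

Definition sensitivity (N : nat) (f : cube N -> bool) : nat :=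
  \max_(x : cube N) sens_at f x.

Definition agrees (N : nat) (p : {mpoly R[N]}) (f : cube N -> bool) : Prop :=
  forall x : cube N, p.@[fun i => ((x i : nat)%:R : R)] = ((f x : nat)%:R : R).

(* "there is a real polynomial of (total) degree <= d agreeing with f";
   msize p = 1 + total degree of p (0 for p = 0). *)
Definition deg_le (N : nat) (f : cube N -> bool) (d : nat) : Prop :=
  exists p : {mpoly R[N]}, (msize p <= d.+1)%N /\ agrees p f.

Definition classical_pred (P : nat -> Prop) : pred nat :=
  fun m => if excluded_middle_informative (P m) then true else false.

(* least m with P m (0 if there is none; never used in that case below) *)
Definition least (P : nat -> Prop) : nat :=
  match excluded_middle_informative (exists m, classical_pred P m) with
  | left H => ex_minn H
  | right _ => 0%N
  end.

Definition degree (N : nat) (f : cube N -> bool) : nat := least (deg_le f).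

(* Alice's writing rule: given the stream received so far
   (sigma_1, ..., sigma_i), the bit she writes in cell sigma_i. *)
Definition alice_rule (n : nat) := seq 'I_n -> bool.
Definition bob_rule (n : nat) := cube n -> {set 'I_n}.

Definition stream (n : nat) (s : {perm 'I_n}) : seq 'I_n :=
  [seq s i | i <- enum 'I_n].

(* The completed array v: cell c = sigma_{k+1} (0-indexed position k) gets
   A(sigma_1..sigma_{k+1}) if k < n-1, and b if c = sigma_n. *)
Definition array (n : nat) (A : alice_rule n) (s : {perm 'I_n}) (b : bool)
  : cube n :=
  [ffun c => let k := val ((s^-1)%g c) in
             if k == n.-1 then b else A (take k.+1 (stream s))].

Definition valid (n : nat) (A : alice_rule n) (B : bob_rule n) : Prop :=
  forall (s : {perm 'I_n}) (b : bool) (i : 'I_n),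
    val i = n.-1 -> s i \in B (array A s b).

Definition cost (n : nat) (A : alice_rule n) (B : bob_rule n) : nat :=
  \max_(s : {perm 'I_n}) \max_(b : bool) #|B (array A s b)|.

Definition Cgame (n : nat) : nat :=
  least (fun m => exists (A : alice_rule n) (B : bob_rule n),
                    valid A B /\ cost A B = m).

From mathcomp Require Import all_boot all_order all_algebra all_fingroup.
From mathcomp Require Import mpoly Rstruct.
From Stdlib Require Import ClassicalEpsilon.

Set Implicit Arguments.
Unset Strict Implicit.
Unset Printing Implicit Defensive.
Import GRing.Theory.
Local Open Scope ring_scope.

(* In the multilinear expansion of f, the coefficient of x_T is the mixed
   finite difference of f in the directions T at the origin. Since
   deg f = d, some such difference with |T| >= d is nonzero, and splitting
   off one direction at a time yields a point z and a set F with |F| = d and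
   nonzero finite difference of f in the directions F at z. The cells of the
   game are identified with F. Whenever a cell is revealed, Alice fixes the
   corresponding coordinate of z so that the finite difference in the
   still unrevealed directions stays nonzero. When a single direction j is
   left, this difference is f(z[j:=1]) - f(z[j:=0]) <> 0, so f is sensitive
   to j at the point encoded by the final array, whatever the last bit.
   Bob answers the cells at which f is sensitive there: at most s(f). *)

Lemma least_le (P : nat -> Prop) m : P m -> (least P <= m)%N.
Proof.
move=> Pm; rewrite /least.
case: excluded_middle_informative => [exP|[]]; last first.
  by exists m; rewrite /classical_pred; case: excluded_middle_informative.
case: ex_minnP => k _; apply; rewrite /classical_pred.
by case: excluded_middle_informative.
Qed.

Lemma big_subset_setD1 (T : finType) (V : nmodType) (G : {set T} -> V)
    (S : {set T}) (j : T) : j \in S ->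
  \sum_(A : {set T} | A \subset S) G A =
  \sum_(A : {set T} | A \subset S :\ j) G (j |: A) +
  \sum_(A : {set T} | A \subset S :\ j) G A.
Proof.
move=> jS; rewrite (bigID [pred A : {set T} | j \in A]) /=; congr (_ + _).
  rewrite (reindex_onto (fun A => j |: A) (fun A => A :\ j)) /=; last first.
    by move=> A /andP[_ jA]; rewrite setD1K.
  apply: eq_bigl => A; rewrite setU11 andbT subsetD1 subUset sub1set jS /=.
  apply/idP/idP => [/andP[-> /eqP <-]|/andP[AS jA]]; first by rewrite !inE eqxx.
  rewrite AS; apply/eqP/setP => i; rewrite !inE.
  by case: (eqVneq i j) => [->|//]; rewrite (negbTE jA).
by apply: eq_bigl => A; rewrite subsetD1.
Qed.

Lemma exists_inj_ord_imset (T : finType) (A : {set T}) d : #|A| = d ->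
  exists2 e : 'I_d -> T, injective e & [set e c | c in setT] = A.
Proof.
move=> cardA; exists (fun c => enum_val (cast_ord (esym cardA) c)).
  by move=> c1 c2 /enum_val_inj /cast_ord_inj.
apply/setP => j; apply/imsetP/idP => [[c _ ->]|jA]; first exact: enum_valP.
exists (cast_ord cardA (enum_rank_in jA j)) => //.
by rewrite cast_ordK enum_rankK_in.
Qed.

Section FiniteDifference.
Variables (N : nat) (f : cube N -> bool).

Definition set_bit (z : cube N) (j : 'I_N) (b : bool) : cube N :=
  [ffun i => if i == j then b else z i].

Definition overwrite (F y : {set 'I_N}) (z : cube N) : cube N :=
  [ffun i => if i \in F then i \in y else z i].

Definition fR (x : cube N) : R := ((f x : nat)%:R : R).

Definition diff (F : {set 'I_N}) (z : cube N) : R :=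
  \sum_(y : {set 'I_N} | y \subset F) (-1) ^+ #|F :\: y| * fR (overwrite F y z).

Lemma set_bit_id (z : cube N) (j : 'I_N) : set_bit z j (z j) = z.
Proof. by apply/ffunP => i; rewrite ffunE; case: eqVneq => // ->. Qed.

Lemma diff_setD1 (F : {set 'I_N}) (z : cube N) (j : 'I_N) : j \in F ->
  diff F z = diff (F :\ j) (set_bit z j true) - diff (F :\ j) (set_bit z j false).
Proof.
move=> jF; rewrite /diff (big_subset_setD1 _ jF) /=; congr (_ + _).
  apply: eq_bigr => y yF; congr (_ * fR _).
    congr (_ ^+ _); apply: eq_card => i; rewrite !inE.
    by case: (i == j); case: (i \in y).
  apply/ffunP => i; rewrite !ffunE !inE.
  by case: (eqVneq i j) => [->|]; rewrite ?jF.
rewrite -sumrN; apply: eq_bigr => y yF.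
have jy : j \notin y by move: yF; rewrite subsetD1 => /andP[].
have -> : #|F :\: y| = #|(F :\ j) :\: y|.+1.
  have -> : F :\: y = j |: ((F :\ j) :\: y).
    apply/setP => i; rewrite !inE; case: (eqVneq i j) => [->|] //=.
    by rewrite jF (negbTE jy).
  by rewrite cardsU1 !inE eqxx andbF.
rewrite exprS mulN1r mulNr; congr (- (_ * fR _)).
apply/ffunP => i; rewrite !ffunE !inE.
by case: (eqVneq i j) => [->|] //=; rewrite (negbTE jy) jF.
Qed.

Lemma diff_set0 (z : cube N) : diff set0 z = fR z.
Proof.
rewrite /diff (big_pred1 set0) => [|y]; last by rewrite subset0.
rewrite setD0 cards0 expr0 mul1r; congr fR; apply/ffunP => i.
by rewrite !ffunE inE.
Qed.

Lemma diff_set1 (z : cube N) (j : 'I_N) :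
  diff [set j] z = fR (set_bit z j true) - fR (set_bit z j false).
Proof. by rewrite (diff_setD1 _ (set11 j)) setDv !diff_set0. Qed.

Definition keep_bit (F : {set 'I_N}) (z : cube N) (j : 'I_N) : bool :=
  diff (F :\ j) (set_bit z j true) != 0.

Lemma diff_keep_bit (F : {set 'I_N}) (z : cube N) (j : 'I_N) :
  j \in F -> diff F z != 0 -> diff (F :\ j) (set_bit z j (keep_bit F z j)) != 0.
Proof.
move=> jF dF; rewrite /keep_bit.
case: (eqVneq (diff (F :\ j) (set_bit z j true)) 0) => // d1.
by move: dF; rewrite (diff_setD1 _ jF) d1 sub0r oppr_eq0.
Qed.

Lemma diff_neq0_card (F : {set 'I_N}) (z : cube N) k :
  (k <= #|F|)%N -> diff F z != 0 ->
  exists (F' : {set 'I_N}) (z' : cube N), #|F'| = k /\ diff F' z' != 0.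
Proof.
have [n] := ubnP #|F|; elim: n F z => // n IH F z ltFn kF dF.
case: (ltngtP k #|F|) kF => // [ltkF _|-> _]; last by exists F, z.
have [j jF] : exists j, j \in F.
  by apply/set0Pn; rewrite -cards_eq0 -lt0n (leq_ltn_trans _ ltkF).
have cardF : #|F| = #|F :\ j|.+1 by rewrite (cardsD1 j F) jF.
by apply: (IH _ _ _ _ (diff_keep_bit jF dF)); rewrite -ltnS -cardF.
Qed.

(* Moebius inversion on the subsets of S. *)
Lemma sum_diff_subset (S : {set 'I_N}) (z : cube N) :
  {in S, forall j, z j = false} ->
  \sum_(T : {set 'I_N} | T \subset S) diff T z = fR (overwrite S S z).
Proof.
have [n] := ubnP #|S|; elim: n S z => // n IH S z ltSn zS.
case: (set_0Vmem S) => [-> | [j jS]].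
  rewrite (big_pred1 set0) => [|y]; last by rewrite subset0.
  by rewrite diff_set0; congr fR; apply/ffunP => i; rewrite !ffunE inE.
rewrite (big_subset_setD1 _ jS).
have zj : z j = false by exact: zS.
have -> : \sum_(T : {set 'I_N} | T \subset S :\ j) diff (j |: T) z =
          \sum_(T : {set 'I_N} | T \subset S :\ j)
             (diff T (set_bit z j true) - diff T z).
  apply: eq_bigr => T; rewrite subsetD1 => /andP[_ jT].
  by rewrite (diff_setD1 _ (setU11 j T)) setU1K // -zj set_bit_id.
rewrite sumrB subrK IH.
- congr fR; apply/ffunP => i; rewrite !ffunE !inE.
  by case: (eqVneq i j) => [->|] //=; rewrite jS.
- by move: ltSn; rewrite (cardsD1 j S) jS.
by move=> i; rewrite !inE ffunE => /andP[/negbTE -> iS]; exact: zS.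
Qed.

Definition zero_pt : cube N := [ffun => false].

Definition mnm_of_set (T : {set 'I_N}) : 'X_{1..N} :=
  [multinom ((i \in T) : nat) | i < N].

Lemma mdeg_mnm_of_set (T : {set 'I_N}) : mdeg (mnm_of_set T) = #|T|.
Proof.
rewrite mdegE -sum1_card [RHS]big_mkcond /=; apply: eq_bigr => i _.
by rewrite mnmE; case: (i \in T).
Qed.

Lemma meval_mnm_of_set (T : {set 'I_N}) (x : cube N) :
  ('X_[mnm_of_set T] : {mpoly R[N]}).@[fun i => ((x i : nat)%:R : R)] =
  ((T \subset [set i | x i]) : nat)%:R.
Proof.
rewrite mevalX; case: (boolP (T \subset _)) => [sTx | /subsetPn[i iT]].
  rewrite big1 // => i _; rewrite mnmE.
  case: (boolP (i \in T)) => iT; last by rewrite expr0.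
  by move: (subsetP sTx i iT); rewrite inE => ->; rewrite expr1.
by rewrite inE => /negbTE xi; rewrite (bigD1 i) //= mnmE iT expr1 xi mul0r.
Qed.

Lemma deg_le_of_diff_eq0 d :
  (forall T : {set 'I_N}, (d <= #|T|)%N -> diff T zero_pt = 0) ->
  exists p : {mpoly R[N]}, (msize p <= d)%N /\ agrees p f.
Proof.
move=> diff0.
exists (\sum_(T : {set 'I_N} | (#|T| < d)%N) diff T zero_pt *: 'X_[mnm_of_set T]).
split.
  apply: (leq_trans (msize_sum _ _ _)); apply/bigmax_leqP => T ltTd.
  by apply: (leq_trans (msizeZ_le _ _)); rewrite msizeX mdeg_mnm_of_set.
move=> x; rewrite raddf_sum /=.
under eq_bigr => T _ do rewrite mevalZ meval_mnm_of_set.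
rewrite big_mkcond /=.
rewrite (eq_bigr (fun T : {set 'I_N} =>
           if T \subset [set i | x i] then diff T zero_pt else 0)); last first.
  move=> T _; case: ltnP => [_|dT]; last by rewrite diff0 //; case: ifP.
  by case: (T \subset _); rewrite ?mulr1 ?mulr0.
rewrite -big_mkcond sum_diff_subset; last by move=> j _; rewrite ffunE.
by congr fR; apply/ffunP => i; rewrite !ffunE !inE; case: (x i).
Qed.

Lemma exists_diff_neq0_card_degree : (exists x y, f x != f y) ->
  exists (T : {set 'I_N}) (z : cube N), #|T| = degree f /\ diff T z != 0.
Proof.
move=> nonconst; set d := degree f.
case: (boolP [exists T : {set 'I_N}, (d <= #|T|)%N && (diff T zero_pt != 0)]).
  by case/existsP => T /andP[dT dT0]; exact: diff_neq0_card dT dT0.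
rewrite negb_exists => /forallP small.
have [p [sp agp]] : exists p : {mpoly R[N]}, (msize p <= d)%N /\ agrees p f.
  apply: deg_le_of_diff_eq0 => T dT; apply/eqP.
  by move: (small T); rewrite dT /= negbK.
exfalso; case d_eq : d sp => [|d'] sp.
  have f0 x : f x = false.
    move: (agp x); move: sp; rewrite leqn0 mmeasure_poly_eq0 => /eqP ->.
    by rewrite meval0; case: (f x) => //= /esym/eqP; rewrite oner_eq0.
  by case: nonconst => x [y]; rewrite !f0.
have : (degree f <= d')%N by apply: least_le; exists p.
by rewrite -/d d_eq ltnn.
Qed.

End FiniteDifference.

Lemma size_stream n (s : {perm 'I_n}) : size (stream s) = n.
Proof. by rewrite size_map size_enum_ord. Qed.

Lemma stream_uniq n (s : {perm 'I_n}) : uniq (stream s).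
Proof. by rewrite map_inj_uniq ?enum_uniq //; exact: perm_inj. Qed.

Lemma mem_stream n (s : {perm 'I_n}) c : c \in stream s.
Proof. by rewrite -[c](permKV s) map_f // mem_enum. Qed.

Lemma nth_stream n (s : {perm 'I_n}) c0 (i : 'I_n) : nth c0 (stream s) i = s i.
Proof. by rewrite (nth_map i) ?nth_ord_enum // size_enum_ord ltn_ord. Qed.

Section Protocol.
Variables (N : nat) (f : cube N -> bool) (d : nat) (e : 'I_d -> 'I_N).
Hypothesis e_inj : injective e.
Variable z0 : cube N.
Let F0 : {set 'I_N} := [set e c | c in setT].
Hypothesis diff_F0 : diff f F0 z0 != 0.

(* A state pairs the set of unrevealed directions with the current point. *)
Definition alice_step (st : {set 'I_N} * cube N) (c : 'I_d) :=
  (st.1 :\ e c, set_bit st.2 (e c) (keep_bit f st.1 st.2 (e c))).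

Definition alice_state (p : seq 'I_d) := foldl alice_step (F0, z0) p.

Lemma alice_step_out q st i : i \notin map e q ->
  (foldl alice_step st q).2 i = st.2 i.
Proof.
elim: q st => [//|c q IH] st /=; rewrite inE negb_or => /andP[ic iq].
by rewrite IH //= ffunE (negbTE ic).
Qed.

Lemma alice_state_inv p : uniq p ->
  (alice_state p).1 = [set j in F0 | j \notin map e p] /\
  diff f (alice_state p).1 (alice_state p).2 != 0.
Proof.
elim/last_ind: p => [_|p c IH]; first by split=> //=; apply/setP => j; rewrite !inE andbT.
rewrite rcons_uniq => /andP[cp up]; have [st1 dst] := IH up.
rewrite /alice_state foldl_rcons -/(alice_state p) /=.
have ecF : e c \in (alice_state p).1.
  by rewrite st1 inE (mem_map e_inj) cp andbT; apply/imsetP; exists c.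
split; last exact: diff_keep_bit.
apply/setP => j; rewrite st1 !inE map_rcons mem_rcons inE negb_or.
by rewrite andbCA andbA.
Qed.

(* The value on the empty stream is never used. *)
Definition alice : alice_rule d :=
  fun p => if p is c0 :: p' then (alice_state p).2 (e (last c0 p')) else false.

Lemma alice_rcons p c : alice (rcons p c) = (alice_state (rcons p c)).2 (e c).
Proof. by case: p => [|c1 p] //=; rewrite last_rcons. Qed.

Definition decode (v : cube d) : cube N :=
  [ffun j => if [pick c | e c == j] is Some c then v c else z0 j].

Definition bob : bob_rule d :=
  fun v => [set c | f (flip (decode v) (e c)) != f (decode v)].

Lemma card_bob v : (#|bob v| <= sensitivity f)%N.
Proof.
apply: (leq_trans _ (leq_bigmax (decode v))); rewrite /sens_at.
rewrite -(card_imset _ e_inj); apply: subset_leq_card.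
by apply/subsetP => j /imsetP[c]; rewrite !inE => fc ->.
Qed.

Section Play.
Variables (s : {perm 'I_d}) (i : 'I_d).
Hypothesis i_last : val i = d.-1.
Let P := take d.-1 (stream s).
Let z := (alice_state P).2.

Lemma array_not_last b (c : 'I_d) : val ((s^-1)%g c) != d.-1 ->
  array alice s b c = z (e c).
Proof.
move=> not_last; rewrite /array ffunE (negbTE not_last).
set k := val ((s^-1)%g c).
have ltkd : (k.+1 <= d.-1)%N.
  by rewrite ltn_neqAle not_last -ltnS (ltn_predK (ltn_ord ((s^-1)%g c))) ltn_ord.
have take_k : take k.+1 (stream s) = rcons (take k (stream s)) c.
  have nth_k : nth c (stream s) k = c.
    exact: etrans (nth_stream s c ((s^-1)%g c)) (permKV s c).
  rewrite (take_nth c) ?nth_k // size_stream; exact: leq_trans ltkd (leq_pred d).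
rewrite take_k alice_rcons -take_k.
have c_late : c \notin drop k.+1 P.
  have := take_uniq d.-1 (stream_uniq s).
  rewrite -/P -{1}(cat_take_drop k.+1 P) take_takel // cat_uniq.
  case/and3P => _ /hasPn late _; apply/negP => cin; move: (late c cin).
  by rewrite take_k mem_rcons inE eqxx.
rewrite /z -(cat_take_drop k.+1 P) take_takel // /alice_state foldl_cat.
by rewrite [RHS]alice_step_out // (mem_map e_inj).
Qed.

Lemma rcons_take_stream : rcons P (s i) = stream s.
Proof.
have ltd : (d.-1 < d)%N by rewrite -i_last ltn_ord.
rewrite /P -(nth_stream _ (s i) i) i_last -take_nth ?size_stream //.
by rewrite (ltn_predK ltd) take_oversize ?size_stream.
Qed.

Lemma alice_state_last : diff f [set e (s i)] z != 0.
Proof.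
have [st1 dst] := alice_state_inv (take_uniq d.-1 (stream_uniq s)).
rewrite -/P in st1 dst; suff <- : (alice_state P).1 = [set e (s i)] by [].
have := stream_uniq s; rewrite -rcons_take_stream rcons_uniq => /andP[siP _].
rewrite st1; apply/setP => j; rewrite !inE.
case: (boolP (j \in F0)) => /= [/imsetP[c _ ->]|jF].
  rewrite (mem_map e_inj) (inj_eq e_inj).
  have := mem_stream s c; rewrite -rcons_take_stream mem_rcons inE.
  by case: (eqVneq c (s i)) => [->|_] //= ->.
apply/esym/negbTE; apply: contraNneq jF => ->; apply/imsetP; by exists (s i).
Qed.

Lemma decode_array b : decode (array alice s b) = set_bit z (e (s i)) b.
Proof.
apply/ffunP => j; rewrite !ffunE.
case: pickP => [c /eqP <-|none].
  rewrite (inj_eq e_inj).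
  case: (eqVneq (val ((s^-1)%g c)) d.-1) => [c_last|c_early].
    have -> : c = s i.
      by rewrite -[c](permKV s); congr (s _); apply/val_inj; rewrite c_last i_last.
    by rewrite /array ffunE permK i_last !eqxx.
  rewrite array_not_last //; case: (eqVneq c (s i)) => // csi.
  by move: c_early; rewrite csi permK i_last eqxx.
have -> : (j == e (s i)) = false.
  by apply/negbTE; rewrite eq_sym; move: (none (s i)) => /= ->.
rewrite /z /alice_state alice_step_out //; apply/mapP => -[c _ jc].
by move: (none c); rewrite jc eqxx.
Qed.

Lemma bob_valid b : s i \in bob (array alice s b).
Proof.
rewrite inE decode_array.
move: alice_state_last; rewrite diff_set1.
set j := e (s i).
have -> : flip (set_bit z j b) j = set_bit z j (~~ b).
  by apply/ffunP => k; rewrite !ffunE; case: (k == j).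
rewrite /fR; case: b => /=; case: (f (set_bit z j true)); case: (f (set_bit z j false));
  by rewrite ?subrr ?eqxx.
Qed.

End Play.

Lemma Cgame_le_sensitivity : (Cgame d <= sensitivity f)%N.
Proof.
apply: (@leq_trans (cost alice bob)).
  by apply: least_le; exists alice, bob; split=> // s b i /bob_valid.
by apply/bigmax_leqP => s _; apply/bigmax_leqP => b _; exact: card_bob.
Qed.

End Protocol.

Theorem proposition1 (N : nat) (f : cube N -> bool)
  (nonconst : exists x y : cube N, f x != f y) :
  (Cgame (degree f) <= sensitivity f)%N.
Proof.
have [T [z [cardT dT]]] := exists_diff_neq0_card_degree nonconst.
have [e e_inj eT] := exists_inj_ord_imset cardT.
by apply: (Cgame_le_sensitivity e_inj (z0 := z)); rewrite eT.
Qed.
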